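(* Let $q(n)$ denote the number of partitions of $n$ into distinct parts, with $q(0)=1$ and $q(n)=0$ for $n<0$, and define $s(n)=q(n)-2q(n-1)+q(n-2)$. Then for every integer $n\ge 6$, $s(n)$ equals the number of partitions of $n$ with parts $q_1\ge q_2\ge\dots\ge q_h$ such that $h\ge 3$, $q_j-q_{j+1}\in\{0,1\}$ for all $1\le j<h$, $q_1=q_2$, and the two smallest parts are both equal to $3$: $q_{h-1}=q_h=3$.
   Context: $q(n)$ counts strict partitions (partitions into distinct parts) of $n$. *)

From mathcomp Require Import all_boot all_order all_algebra.
Set Implicit Arguments. Unset Strict Implicit. Unset Printing Implicit Defensive.

Definition is_partition (n : nat) (s : seq nat) : bool :=
  [&& sorted geq s, all (fun x => 0 < x) s & sumn s == n].

Definition is_strict_partition (n : nat) (s : seq nat) : bool :=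
  is_partition n s && uniq s.

Fixpoint all_seqs (b k : nat) : seq (seq nat) :=
  if k is k'.+1 then
    [::] :: [seq x :: t | x <- iota 0 b.+1, t <- all_seqs b k']
  else [:: [::]].

(* Every partition of n has at most n parts, each at most n, so it appears in
   [all_seqs n n]; hence this counts ALL lists s with P s that are partitions of n. *)
Definition count_partitions (P : seq nat -> bool) (n : nat) : nat :=
  count (fun s => is_partition n s && P s) (undup (all_seqs n n)).

Definition qn (n : nat) : nat := count_partitions uniq n.

Definition q (z : int) : nat :=
  match z with Posz n => qn n | Negz _ => 0%N end.

Local Open Scope ring_scope.
Definition s (n : int) : int := (q n)%:Z - 2 * (q (n - 1))%:Z + (q (n - 2))%:Z.
Local Close Scope ring_scope.

(* Property of a partition q_1 >= ... >= q_h (list index j-1 <-> q_j):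
   h >= 3, q_j - q_{j+1} in {0,1}, q_1 = q_2, q_{h-1} = q_h = 3. *)
Definition good (p : seq nat) : bool :=
  let h := size p in
  [&& 3 <= h,
      all (fun j => (nth 0 p j - nth 0 p j.+1 == 0) || (nth 0 p j - nth 0 p j.+1 == 1))
          (iota 0 h.-1),
      nth 0 p 0 == nth 0 p 1,
      nth 0 p h.-2 == 3 & nth 0 p h.-1 == 3].

From mathcomp Require Import all_boot all_order all_algebra.
From mathcomp Require Import ring zify.
Import GRing.Theory.

(* The generating function of s is (1 - x)^2 \prod_(k >= 1) (1 + x^k).  Truncating the
   product at x^H, a telescoping polynomial identity shows that for n >= 6 the n-th
   coefficient equals \sum_(3 <= h, 3 h <= n) [x^(n - 3h)] \prod_(2 <= k <= h - 2) (1 + x^k),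
   i.e. the number of pairs (h, l) with l a strict partition of n - 3h into parts from
   [2, h - 2].  Conjugation maps such an l bijectively onto the gap-free partitions (parts
   decreasing by 0 or 1, smallest part 1) with a repeated largest part and at most h - 2
   parts; adding 3 to every part and padding with parts 3 up to length h yields exactly
   the partitions counted on the right-hand side, with h parts. *)

Lemma all_seqs_complete b k s :
  size s <= k -> all (fun x => x <= b) s -> s \in all_seqs b k.
Proof.
elim: k s => [|k IHk] [|x t] // size_t /andP[x_le t_le].
rewrite in_cons; apply/orP; right; apply/allpairsPdep; exists x, t.
by rewrite mem_iota add0n ltnS x_le IHk.
Qed.

Lemma size_le_sumn s : all (leq 1) s -> size s <= sumn s.
Proof. by elim: s => //= x s IHs /andP[x_gt0 /IHs]; lia. Qed.

Lemma mem_le_sumn s x : x \in s -> x <= sumn s.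
Proof. by elim: s => //= y s IHs; rewrite in_cons => /orP[/eqP-> | /IHs]; lia. Qed.

Lemma count_partitions_enum {P : pred (seq nat)} {n} {L : seq (seq nat)} :
  uniq L -> (forall s, (s \in L) = is_partition n s && P s) ->
  count_partitions P n = size L.
Proof.
move=> uniqL memL; rewrite /count_partitions -size_filter.
apply/perm_size/uniq_perm; rewrite ?filter_uniq ?undup_uniq // => s.
rewrite mem_filter memL mem_undup; apply/andb_idr => /andP[/and3P[_ pos /eqP sum_s] _].
rewrite all_seqs_complete -?sum_s ?size_le_sumn //.
by apply/allP => x; apply: mem_le_sumn.
Qed.

Lemma mem_map_cons (T : eqType) (c : T) (L : seq (seq T)) s :
  (s \in [seq c :: t | t <- L]) = if s is x :: t then (x == c) && (t \in L) else false.
Proof.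
case: s => [|x t]; first by apply/mapP => -[].
by apply/mapP/andP => [[u uL [-> ->]] // | [/eqP-> tL]]; exists t.
Qed.

Lemma path_headE {e : rel nat} {x} s : e x 0 -> path e x s = e x (head 0 s) && sorted e s.
Proof. by case: s => [|y s] ex0 //=; rewrite ex0. Qed.

Lemma sorted_gtn_geq {s} : sorted gtn s -> sorted geq s.
Proof. by apply: sub_sorted => x y; apply: ltnW. Qed.

Lemma sorted_geq_last s : sorted geq s -> all (leq (last 0 s)) s.
Proof.
move=> geq_s; apply/allP => x xs; rewrite -nth_last -[x](nth_index 0 xs).
have size_gt0 : 0 < size s by case: s xs {geq_s}.
have idx_lt : index x s < size s by rewrite index_mem.
by apply: (sorted_leq_nth (rev_trans leq_trans) leqnn) => //; rewrite ?inE; lia.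
Qed.

Section StrictParts.

Variable a : nat.
Hypothesis a_gt0 : 0 < a.

Fixpoint strict_parts (b m : nat) : seq (seq nat) :=
  if b is b'.+1 then
    strict_parts b' m ++
    (if a <= b <= m then [seq b :: t | t <- strict_parts b' (m - b)] else [::])
  else if m == 0 then [:: [::]] else [::].

Lemma mem_strict_parts b m s :
  (s \in strict_parts b m) = [&& path gtn b.+1 s, all (leq a) s & sumn s == m].
Proof.
elim: b m s => [|b IHb] m s.
  case: s => [|x t] /=; first by case: m.
  rewrite (_ : x :: t \in _ = false); last by case: (m == 0).
  by apply/esym/negbTE/and3P => -[/andP[x_lt _] /andP[a_le _] _]; lia.
rewrite mem_cat IHb (fun_if (fun L => s \in L)) mem_map_cons in_nil.
case: s => [|x t]; first by rewrite if_same orbF.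
rewrite [path _ _ (_ :: _)]/= [all _ (_ :: _)]/= [sumn _]/= IHb.
have [x_lt | x_gt | ->] := ltngtP x b.+1.
- by rewrite /= ltnS (ltnW x_lt) if_same orbF.
- by rewrite /= ltnS (ltn_geF x_gt) if_same.
rewrite /= ltnS leqnn; case: (leqP a b.+1) => /= _; last by rewrite andbF.
case: (leqP b.+1 m) => /= bm; first by congr [&& _, _ & _]; apply/eqP/eqP; lia.
by apply/esym/negbTE/and3P => -[_ _ /eqP]; lia.
Qed.

Lemma uniq_strict_parts b m : uniq (strict_parts b m).
Proof.
elim: b m => [|b IHb] m /=; first by case: (m == 0).
rewrite cat_uniq IHb; case: ifP => // _.
rewrite map_inj_uniq ?IHb ?andbT; last by move=> ? ? [].
by apply/hasPn => _ /mapP[t _ ->]; rewrite mem_strict_parts /= ltnn.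
Qed.

Local Open Scope ring_scope.

Definition strict_gf b : {poly int} := \prod_(a <= k < b.+1) (1 + 'X^k).

Lemma coef_strict_gf b m : (strict_gf b)`_m = (size (strict_parts b m))%:Z.
Proof.
elim: b m => [|b IHb] m; first by rewrite /strict_gf big_geq // coef1; case: m.
rewrite /= size_cat PoszD -IHb /strict_gf.
have [ab | ba] := leqP a b.+1; last by rewrite /= addr0 big_geq // big_geq // ltnW.
rewrite big_nat_recr //= -/(strict_gf b) mulrDr mulr1 coefD coefMXn ltnNge.
by case: (b < m)%N; rewrite /= ?addr0 ?size_map ?IHb.
Qed.

End StrictParts.

Lemma qn_strict_parts b m : m <= b -> qn m = size (strict_parts 1 b m).
Proof.
move=> m_le_b; rewrite /qn (count_partitions_enum (@uniq_strict_parts 1 isT b m)) => [// | s].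
rewrite mem_strict_parts // path_sortedE; last exact: rev_trans ltn_trans.
rewrite gtn_sorted_uniq_geq /is_partition.
case: (sumn s =P m) => [sum_s | _]; last by rewrite !andbF.
have -> : all (gtn b.+1) s by apply/allP => x /mem_le_sumn; rewrite sum_s /=; lia.
by case: (uniq s); rewrite ?andbF ?andbT.
Qed.

Section GeneratingFunction.

Local Open Scope ring_scope.

Lemma strict_gfS a b : (a <= b.+1)%N -> strict_gf a b.+1 = strict_gf a b * (1 + 'X^(b.+1)).
Proof. by move=> ab; rewrite /strict_gf big_nat_recr. Qed.

Lemma strict_gf1 b : (0 < b)%N -> strict_gf 1 b = (1 + 'X) * strict_gf 2 b.
Proof. by move=> b_gt0; rewrite /strict_gf big_ltn. Qed.

Lemma coef_strict_gf1 b m : (m <= b)%N -> (strict_gf 1 b)`_m = (qn m)%:Z.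
Proof. by move=> m_le_b; rewrite coef_strict_gf // -qn_strict_parts. Qed.

Lemma s_coef n : (2 <= n)%N -> s n = ((1 - 'X)^+2 * strict_gf 1 n)`_n.
Proof.
move=> n_ge2; have n_ge1 := ltnW n_ge2.
rewrite /s (subzn n_ge1) (subzn n_ge2) /=.
have -> : (1 - 'X)^+2 * strict_gf 1 n
          = strict_gf 1 n - ('X * strict_gf 1 n) *+ 2 + 'X^2 * strict_gf 1 n by ring.
rewrite coefD coefB coefMn coefXM coefXnM (negbTE (lt0n_neq0 n_ge1)) ltnNge n_ge2 /= -subn1.
by rewrite !coef_strict_gf1 ?leq_subr // mulr2n mulrDl mul1r.
Qed.

(* The second summand has valuation H + 1, so it does not affect the coefficient of x^H. *)
Lemma strict_gf_telescope H : (2 <= H)%N ->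
  (1 - 'X)^+2 * strict_gf 1 H
    + 'X^(H.+1) * ((1 - 'X) * strict_gf 1 H + 'X^(H.+2) * strict_gf 2 H.-1)
  = 1 - 'X + 'X^3 - 'X^4 + 'X^5 + \sum_(3 <= h < H.+1) 'X^(3 * h) * strict_gf 2 (h - 2).
Proof.
elim: H => // H IH; rewrite leq_eqVlt => /orP[/eqP[<-] | H_ge2].
  by rewrite big_geq // strict_gf1 // strict_gfS // /strict_gf big_geq //; ring.
have gf2_H : strict_gf 2 H = strict_gf 2 H.-1 * (1 + 'X^H).
  by case: H H_ge2 {IH} => [|H] // H_ge2; rewrite strict_gfS // -ltnS ltnW.
rewrite big_nat_recr //= addrA -IH // !strict_gfS ?(ltnW H_ge2) // strict_gf1; last by lia.
rewrite gf2_H (_ : H.+1 - 2 = H.-1)%N; last by lia.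
rewrite mulnS mulnC exprD exprM !exprSr; set y := 'X^H; ring.
Qed.

Lemma coef_telescope n : (6 <= n)%N ->
  ((1 - 'X)^+2 * strict_gf 1 n)`_n
  = \sum_(3 <= h < n.+1 | (3 * h <= n)%N) (strict_gf 2 (h - 2))`_(n - 3 * h).
Proof.
move=> n_ge6; have /(congr1 (coefp n)) := strict_gf_telescope n (leq_trans (isT : 2 <= 6)%N n_ge6).
rewrite /= coefD coefXnM ltnSn addr0 => ->.
rewrite coefD coef_sum [RHS]big_mkcond /=.
have -> : (1 - 'X + 'X^3 - 'X^4 + 'X^5 : {poly int})`_n = 0.
  by case: n n_ge6 => [|[|[|[|[|[|n]]]]]] // _; rewrite !(coefB, coefD, coefXn, coefX, coef1).
rewrite add0r; apply: eq_bigr => h _; rewrite coefXnM ltnNge.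
by case: (3 * h <= n)%N.
Qed.

End GeneratingFunction.

Definition step01 (x y : nat) := y <= x <= y.+1.

Lemma step01_geq : subrel step01 geq.
Proof. by move=> x y /andP[]. Qed.

Definition gap_free (u : seq nat) := [&& sorted step01 u, all (leq 1) u & last 0 u <= 1].

Definition top_repeated (u : seq nat) := nth 0 u 0 == nth 0 u 1.

Lemma top_repeated_size {u} : all (leq 1) u -> top_repeated u -> u != [::] -> 1 < size u.
Proof.
by case: u => [|x [|y u]] //=; rewrite andbT /top_repeated /= => x_pos /eqP x0; rewrite x0 in x_pos.
Qed.

Definition raise (k : nat) (u : seq nat) (r : nat) := map (addn k) u ++ nseq r k.

Definition lower (k : nat) (s : seq nat) := [seq x - k | x <- s & k < x].

Lemma size_raise k u r : size (raise k u r) = size u + r.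
Proof. by rewrite size_cat size_map size_nseq. Qed.

Lemma sumn_raise k u r : sumn (raise k u r) = sumn u + k * (size u + r).
Proof. by rewrite sumn_cat sumn_nseq; elim: u => [|x u IHu] /=; lia. Qed.

Lemma nth_raise k u r i :
  nth 0 (raise k u r) i = if i < size u then k + nth 0 u i else if i < size u + r then k else 0.
Proof.
rewrite nth_cat size_map; case: ltnP => [i_lt | i_ge]; first by rewrite (nth_map 0).
by rewrite nth_nseq; congr (if _ then _ else _); lia.
Qed.

Lemma last_raise k u r : last 0 (raise k u r.+1) = k.
Proof. by rewrite last_cat /=; elim: r. Qed.

Lemma all_raise k u r : all (leq k) (raise k u r).
Proof.
rewrite all_cat all_map all_nseq /= leqnn orbT andbT.
by apply/allP => x _; apply: leq_addr.
Qed.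

Lemma sorted_raise k u r :
  sorted step01 (raise k u r.+1) = sorted step01 u && (last 0 u <= 1).
Proof.
have flat : path step01 k (nseq r k) by elim: r => //= r ->; rewrite /step01 leqnn leqnSn.
case: u => [|x u] /=; first by rewrite flat.
rewrite cat_path last_map path_map /= flat andbT.
have shift : relpre (addn k) step01 =2 step01 by move=> y z; rewrite /step01 /=; lia.
by rewrite (eq_path shift) /step01 leq_addr /=; congr (_ && _); lia.
Qed.

Lemma top_raise k u r : 0 < k -> all (leq 1) u -> 0 < r ->
  top_repeated (raise k u r) = if u is [::] then 1 < r else top_repeated u.
Proof.
rewrite /top_repeated !nth_raise => k_gt0 pos_u r_gt0.
case: u pos_u => [|x [|y u]] /=.
- by rewrite add0n r_gt0; case: r r_gt0 => [|[|r]] //= _ _; lia.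
- by rewrite (_ : 1 < 1 + r) // => /andP[x_gt0 _]; lia.
- by rewrite eqn_add2l.
Qed.

Lemma lower_pos k s : all (leq 1) (lower k s).
Proof.
by apply/allP => y /mapP[x]; rewrite mem_filter => /andP[k_lt_x _] ->; rewrite /= subn_gt0.
Qed.

Lemma lower_nseq k n : lower k (nseq n k) = [::].
Proof. by rewrite /lower; elim: n => //= n; rewrite ltnn. Qed.

Lemma size_lower_lt k s : s != [::] -> last 0 s <= k -> size (lower k s) < size s.
Proof.
case: s => // x s _ last_le; rewrite size_map size_filter -[size _](count_predC (ltn k)).
rewrite -addn1 leq_add2l -has_count; apply/hasP; exists (last x s); first exact: mem_last.
by rewrite /= -leqNgt.
Qed.

Lemma lower_raise k u r : all (leq 1) u -> lower k (raise k u r) = u.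
Proof.
rewrite /lower filter_cat map_cat -/(lower k (nseq r k)) lower_nseq cats0.
elim: u => //= x u IHu /andP[x_pos /IHu IH].
have -> : k < k + x by rewrite -addn1 leq_add2l.
by rewrite /= addKn IH.
Qed.

Lemma raise_lower k s : sorted geq s -> all (leq k) s ->
  raise k (lower k s) (size s - size (lower k s)) = s.
Proof.
elim: s => [|x s IHs] //= path_s /andP[k_le_x k_le_s].
have [k_lt_x | x_le_k] := ltnP k x.
  rewrite /lower /= k_lt_x /= subSS -/(lower k s) /raise /= subnKC 1?ltnW //.
  by rewrite -/(raise _ _ _) IHs ?(path_sorted path_s).
have x_eq_k : x = k by apply/eqP; rewrite eqn_leq x_le_k.
have s_k : all (pred1 k) s.
  move: path_s; rewrite path_sortedE; last exact: rev_trans leq_trans.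
  case/andP=> /allP le_x _; apply/allP => y ys; rewrite /= eqn_leq (allP k_le_s) // andbT.
  by rewrite -x_eq_k; apply: le_x.
rewrite x_eq_k; move/all_pred1P: s_k => ->.
by rewrite -[k :: _]/(nseq (size s).+1 k) lower_nseq size_nseq subn0.
Qed.

Fixpoint conj_part (s : seq nat) : seq nat :=
  if s is x :: t then raise 1 (conj_part t) (x - size (conj_part t)) else [::].

Lemma conj_part_pos s : all (leq 1) (conj_part s).
Proof. by case: s => //= x t; apply: all_raise. Qed.

Lemma size_conj_part s : sorted geq s -> size (conj_part s) = head 0 s.
Proof.
elim: s => //= x t IHt; rewrite path_headE // => /andP[head_le sorted_t].
by rewrite size_raise IHt // subnKC.
Qed.

Lemma sumn_conj_part s : sorted geq s -> sumn (conj_part s) = sumn s.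
Proof.
elim: s => //= x t IHt; rewrite path_headE // => /andP[head_le sorted_t].
by rewrite sumn_raise IHt // mul1n size_conj_part // subnKC // addnC.
Qed.

Lemma gap_free_conj_part {s} : sorted gtn s -> all (leq 1) s -> gap_free (conj_part s).
Proof.
elim: s => //= x t IHt /[swap] /andP[x_pos pos_t].
rewrite path_headE // => /andP[head_lt sorted_t].
have /and3P[step_t _ last_t] := IHt sorted_t pos_t.
have r_pos : 0 < x - head 0 t by rewrite subn_gt0.
rewrite /gap_free all_raise size_conj_part ?sorted_gtn_geq // -(prednK r_pos).
by rewrite sorted_raise step_t last_t last_raise.
Qed.

Lemma top_conj_part {s} : sorted gtn s -> all (leq 2) s -> top_repeated (conj_part s).
Proof.
elim: s => //= x t IHt /[swap] /andP[x_ge2 t_ge2].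
rewrite path_headE => [/andP[head_lt sorted_t] | ]; last exact: ltnW x_ge2.
have size_t := size_conj_part _ (sorted_gtn_geq sorted_t).
rewrite top_raise ?conj_part_pos ?size_t ?subn_gt0 //.
case E: (conj_part t) => [|z w]; last by rewrite -E IHt.
rewrite E in size_t; case: t size_t t_ge2 {IHt sorted_t E head_lt} => [|y t] /= y0.
  by rewrite subn0.
by rewrite -y0.
Qed.

Lemma conj_part_inj s1 s2 : sorted geq s1 -> all (leq 1) s1 ->
  sorted geq s2 -> all (leq 1) s2 -> conj_part s1 = conj_part s2 -> s1 = s2.
Proof.
elim: s1 s2 => [|x t IHt] [|y t'] // geq1 pos1 geq2 pos2 E;
  have := congr1 size E; rewrite !size_conj_part //=.
- by move: pos2 => /andP[y_pos _] y0; rewrite -y0 in y_pos.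
- by move: pos1 => /andP[x_pos _] x0; rewrite x0 in x_pos.
move=> <-; congr (_ :: _); move: E => /= /(congr1 (lower 1)).
rewrite !lower_raise ?conj_part_pos //; case/andP: pos1 => _ pos_t; case/andP: pos2 => _ pos_t'.
by apply: IHt; rewrite ?(path_sorted geq1) ?(path_sorted geq2).
Qed.

(* Induction on size u: with v := lower 1 u we have u = raise 1 v r for some r > 0,
   and u is the conjugate of size u :: s as soon as v is the conjugate of s. *)
Lemma conj_part_onto {u} : gap_free u -> top_repeated u ->
  exists2 s, sorted gtn s && all (leq 2) s & conj_part s = u.
Proof.
have [n] := ubnP (size u); elim: n u => // n IHn u size_u /and3P[step_u pos_u last_u] top_u.
have [-> | u_nil] := eqVneq u [::]; first by exists [::].
have size_u2 := top_repeated_size pos_u top_u u_nil.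
set v := lower 1 u.
have u_eq : raise 1 v (size u - size v) = u.
  by apply: raise_lower => //; apply: sub_sorted step01_geq _ step_u.
have r_pos : 0 < size u - size v by rewrite subn_gt0 size_lower_lt.
rewrite -u_eq -(prednK r_pos) sorted_raise in step_u.
rewrite -u_eq top_raise ?lower_pos // in top_u.
have size_v : size v < n by rewrite -ltnS (leq_trans _ size_u) // -subn_gt0.
have gap_free_v : gap_free v.
  by case/andP: step_u => step_v last_v; rewrite /gap_free step_v last_v lower_pos.
have top_v : top_repeated v by case: (v) top_u.
have [s /andP[gtn_s ge2_s] conj_s] := IHn v size_v gap_free_v top_v.
exists (size u :: s); last by rewrite /= conj_s u_eq.
rewrite /= size_u2 ge2_s andbT path_headE ?gtn_s ?andbT; last exact: ltnW size_u2.
by rewrite -size_conj_part ?sorted_gtn_geq // conj_s /= -subn_gt0.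
Qed.

Lemma sorted_step01E s : sorted step01 s = sorted geq s &&
  all (fun j => (nth 0 s j - nth 0 s j.+1 == 0) || (nth 0 s j - nth 0 s j.+1 == 1))
      (iota 0 (size s).-1).
Proof.
apply/idP/andP => [step_s | [/(sortedP 0) geq_s /allP steps]].
  split; first exact: sub_sorted step01_geq _ step_s.
  apply/allP => j; rewrite mem_iota => /andP[_ j_lt].
  have /andP[] : step01 (nth 0 s j) (nth 0 s j.+1) by apply: (sortedP 0 step_s); lia.
  lia.
apply/(sortedP 0) => j j_lt; have /= := geq_s j j_lt.
have : j \in iota 0 (size s).-1 by rewrite mem_iota; lia.
by move/steps; rewrite /step01; lia.
Qed.

Lemma good_raise {h u} : 2 < h -> gap_free u -> top_repeated u -> size u + 2 <= h ->
  is_partition (sumn u + 3 * h) (raise 3 u (h - size u)) && good (raise 3 u (h - size u)).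
Proof.
move=> h_gt2 /and3P[step_u pos_u last_u] top_u size_le; set s := raise 3 u _.
have r_gt1 : 1 < h - size u by lia.
have step_s : sorted step01 s by rewrite /s -(prednK (ltnW r_gt1)) sorted_raise step_u.
have size_s : size s = h by rewrite size_raise; lia.
have pos_s : all (leq 1) s by apply: sub_all (all_raise 3 u _) => x; apply: leq_trans.
have sum_s : sumn s = sumn u + 3 * h by rewrite sumn_raise subnKC //; lia.
have [nth2 nth1] : nth 0 s h.-2 = 3 /\ nth 0 s h.-1 = 3.
  by split; rewrite nth_raise ifN ?ifT //; lia.
have top_s : top_repeated s by rewrite top_raise ?(ltnW r_gt1) //; case: (u) top_u r_gt1.
move: step_s; rewrite sorted_step01E => /andP[geq_s steps].
rewrite /is_partition /good geq_s steps size_s pos_s sum_s -/(top_repeated s) top_s.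
by rewrite nth2 nth1 h_gt2 eqxx.
Qed.

Lemma good_lower {n s} : is_partition n s -> good s ->
  [/\ gap_free (lower 3 s), top_repeated (lower 3 s), size (lower 3 s) + 2 <= size s,
      sumn (lower 3 s) + 3 * size s = n & raise 3 (lower 3 s) (size s - size (lower 3 s)) = s].
Proof.
case/and3P=> geq_s _ /eqP sum_s /and5P[h_gt2 steps top_s nth2 nth1].
have step_s : sorted step01 s by rewrite sorted_step01E geq_s.
have last_s : last 0 s = 3 by rewrite -nth_last; apply/eqP.
have s_eq : raise 3 (lower 3 s) (size s - size (lower 3 s)) = s.
  by apply: raise_lower => //; rewrite -last_s sorted_geq_last.
set u := lower 3 s in s_eq *; set h := size s in s_eq h_gt2 nth2 nth1 *.
have size_u : size u + 2 <= h.
  rewrite leqNgt; apply/negP => u_big; have h2_lt : h.-2 < size u by lia.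
  have := allP (lower_pos 3 s) _ (mem_nth 0 h2_lt).
  by move: nth2; rewrite -s_eq nth_raise h2_lt /=; lia.
have r_pos : 0 < h - size u by lia.
move: step_s top_s; rewrite -s_eq -(prednK r_pos) sorted_raise -/(top_repeated _).
rewrite top_raise ?lower_pos // => /andP[step_u last_u] top_u.
split => //.
- by rewrite /gap_free step_u last_u lower_pos.
- by case: (u) top_u.
by rewrite -sum_s -s_eq sumn_raise; lia.
Qed.

Lemma all_leq2_pos {s} : all (leq 2) s -> all (leq 1) s.
Proof. by apply: sub_all => x; apply: ltnW. Qed.

Lemma strict_parts_conj {h m l} : 1 < h -> l \in strict_parts 2 (h - 2) m ->
  [/\ sorted gtn l, all (leq 2) l, size (conj_part l) + 2 <= h & sumn (conj_part l) = m].
Proof.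
move=> h_gt1; rewrite mem_strict_parts // path_headE // => /and3P[/andP[head_lt gtn_l] ge2_l].
move=> /eqP sum_l; rewrite size_conj_part ?sumn_conj_part ?sorted_gtn_geq //.
by split => //; move: head_lt => /=; lia.
Qed.

Definition good_enum n : seq (seq nat) :=
  [seq raise 3 (conj_part l) (h - size (conj_part l))
     | h <- [seq h <- index_iota 3 n.+1 | 3 * h <= n], l <- strict_parts 2 (h - 2) (n - 3 * h)].

Lemma mem_good_enum n s : (s \in good_enum n) = is_partition n s && good s.
Proof.
apply/allpairsPdep/idP => [[h [l [h_in l_in ->]]] | /andP[part_s good_s]].
  rewrite mem_filter mem_index_iota in h_in; case/and3P: h_in => h3n h_gt2 _.
  have [gtn_l ge2_l size_l sum_l] := strict_parts_conj (ltnW h_gt2) l_in.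
  have gap_free_l := gap_free_conj_part gtn_l (all_leq2_pos ge2_l).
  have := good_raise h_gt2 gap_free_l (top_conj_part gtn_l ge2_l).
  by rewrite sum_l subnK //; apply.
case/and5P: (good_s) => h_gt2 _ _ _ _.
case: (good_lower part_s good_s) => gap_free_u top_u size_u sum_u s_eq.
have [l /andP[gtn_l ge2_l] conj_l] := conj_part_onto gap_free_u top_u.
exists (size s), l; rewrite conj_l s_eq; split => //.
  by rewrite mem_filter mem_index_iota h_gt2 /=; apply/andP; split; lia.
have geq_l := sorted_gtn_geq gtn_l.
rewrite mem_strict_parts // ge2_l -(sumn_conj_part _ geq_l) conj_l path_headE //= gtn_l.
by rewrite -(size_conj_part _ geq_l) conj_l; apply/andP; split; [lia | apply/eqP; lia].
Qed.

Lemma uniq_good_enum n : uniq (good_enum n).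
Proof.
apply: (allpairs_uniq_dep (T := fun=> seq nat)).
- by rewrite filter_uniq ?iota_uniq.
- by move=> h _; apply: uniq_strict_parts.
move=> _ _ /allpairsPdep[h1 [l1 [h1_in l1_in ->]]] /allpairsPdep[h2 [l2 [h2_in l2_in ->]]] /= E.
rewrite !mem_filter !mem_index_iota in h1_in h2_in.
have h1_gt1 : 1 < h1 by lia.
have h2_gt1 : 1 < h2 by lia.
have [gtn1 ge2_1 size1 _] := strict_parts_conj h1_gt1 l1_in.
have [gtn2 ge2_2 size2 _] := strict_parts_conj h2_gt1 l2_in.
have h12 : h1 = h2 by move/(congr1 size): E; rewrite !size_raise !subnKC //; lia.
subst h2; move/(congr1 (lower 3)): E; rewrite !lower_raise ?conj_part_pos //.
by move/conj_part_inj => -> //; rewrite ?sorted_gtn_geq ?all_leq2_pos.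
Qed.

Lemma count_good n : count_partitions good n
  = \sum_(3 <= h < n.+1 | 3 * h <= n) size (strict_parts 2 (h - 2) (n - 3 * h)).
Proof.
rewrite (count_partitions_enum (uniq_good_enum n)) => [|s]; last exact: mem_good_enum.
by rewrite size_allpairs_dep sumnE big_map big_filter.
Qed.

Theorem corollary1p6 (n : nat) : 6 <= n ->
  s (Posz n) = Posz (count_partitions good n).
Proof.
move=> n_ge6; rewrite s_coef ?(leq_trans _ n_ge6) // coef_telescope // count_good.
rewrite -natz natr_sum; apply: eq_bigr => h _.
by rewrite coef_strict_gf // natz.
Qed.
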